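(* Let $\mathbb{X}$ be a real reflexive Banach space and $\mathbb{Y}$ a real normed space. Let $T,A \in \mathbb{K}(\mathbb{X},\mathbb{Y})$ with $A \neq 0$, and let $0 \le \epsilon < 1$. Then $T \perp_D^{\epsilon} A$ if and only if at least one of the following holds: (a) there exists $x \in M_T$ such that $Ax \in (Tx)^+$, and for each $\lambda \in \left(-1-\sqrt{1-\epsilon^2},\, -1+\sqrt{1-\epsilon^2}\right)\frac{\|T\|}{\|A\|}$ there exists $x_\lambda \in S_{\mathbb{X}}$ with $\|Tx_\lambda + \lambda A x_\lambda\| \ge \sqrt{1-\epsilon^2}\,\|T\|$; (b) there exists $y \in M_T$ such that $Ay \in (Ty)^-$, and for each $\lambda \in \left(1-\sqrt{1-\epsilon^2},\, 1+\sqrt{1-\epsilon^2}\right)\frac{\|T\|}{\|A\|}$ there exists $y_\lambda \in S_{\mathbb{X}}$ with $\|Ty_\lambda + \lambda A y_\lambda\| \ge \sqrt{1-\epsilon^2}\,\|T\|$.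
   Context: All spaces are real. $\mathbb{K}(\mathbb{X},\mathbb{Y})$ denotes the space of compact linear operators from $\mathbb{X}$ to $\mathbb{Y}$. $S_{\mathbb{X}}=\{x\in\mathbb{X}:\|x\|=1\}$. For a bounded linear operator $T$, $M_T=\{x\in S_{\mathbb{X}}: \|Tx\|=\|T\|\}$ (norm attainment set). For elements $u,v$ of a normed space, $v \in u^+$ means $\|u+\lambda v\|\ge\|u\|$ for all $\lambda\ge 0$, and $v\in u^-$ means $\|u+\lambda v\|\ge\|u\|$ for all $\lambda\le 0$. For $\epsilon\in[0,1)$ and $u,v$ in a normed space (in particular operators with the operator norm), $u\perp_D^{\epsilon} v$ means $\|u+\lambda v\|\ge\sqrt{1-\epsilon^2}\,\|u\|$ for all $\lambda\in\mathbb{R}$. *)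

From Stdlib Require Import Reals Lra ClassicalEpsilon.
Open Scope R_scope.

Record NormedSpace := {
  carrier :> Type;
  vzero : carrier;
  vadd : carrier -> carrier -> carrier;
  vopp : carrier -> carrier;
  vscal : R -> carrier -> carrier;
  vnorm : carrier -> R;
  vadd_assoc : forall x y z, vadd x (vadd y z) = vadd (vadd x y) z;
  vadd_comm : forall x y, vadd x y = vadd y x;
  vadd_0 : forall x, vadd x vzero = x;
  vadd_opp : forall x, vadd x (vopp x) = vzero;
  vscal_assoc : forall a b x, vscal a (vscal b x) = vscal (a * b) x;
  vscal_1 : forall x, vscal 1 x = x;
  vscal_addv : forall a x y, vscal a (vadd x y) = vadd (vscal a x) (vscal a y);
  vscal_adds : forall a b x, vscal (a + b) x = vadd (vscal a x) (vscal b x);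
  vnorm_eq0 : forall x, vnorm x = 0 -> x = vzero;
  vnorm_scal : forall a x, vnorm (vscal a x) = Rabs a * vnorm x;
  vnorm_triangle : forall x y, vnorm (vadd x y) <= vnorm x + vnorm y
}.

Arguments vzero {n}.
Arguments vadd {n}.
Arguments vopp {n}.
Arguments vscal {n}.
Arguments vnorm {n}.

Definition vsub {X : NormedSpace} (x y : X) : X := vadd x (vopp y).

Definition is_Banach (X : NormedSpace) : Prop :=
  forall u : nat -> X,
    (forall eps, eps > 0 -> exists N, forall m n, (m >= N)%nat -> (n >= N)%nat ->
        vnorm (vsub (u m) (u n)) < eps) ->
    exists l : X, forall eps, eps > 0 -> exists N, forall n, (n >= N)%nat ->
        vnorm (vsub (u n) l) < eps.

Definition sup_ball {X : NormedSpace} (g : X -> R) : R :=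
  epsilon (inhabits 0)
    (fun r => is_lub (fun s => exists x : X, vnorm x <= 1 /\ s = g x) r).

Definition is_linear {X Y : NormedSpace} (T : X -> Y) : Prop :=
  (forall x y, T (vadd x y) = vadd (T x) (T y)) /\
  (forall a x, T (vscal a x) = vscal a (T x)).

Definition opnorm {X Y : NormedSpace} (T : X -> Y) : R :=
  sup_ball (fun x => vnorm (T x)).

Definition is_bounded_functional {X : NormedSpace} (f : X -> R) : Prop :=
  (forall x y, f (vadd x y) = f x + f y) /\
  (forall a x, f (vscal a x) = a * f x) /\
  (exists C, forall x, Rabs (f x) <= C * vnorm x).

Definition dualnorm {X : NormedSpace} (f : X -> R) : R :=
  sup_ball (fun x => Rabs (f x)).

(* Reflexivity: every continuous linear functional on the dual X* is
   evaluation at some point of X (canonical embedding X -> X** surjective). *)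
Definition is_reflexive (X : NormedSpace) : Prop :=
  forall phi : (X -> R) -> R,
    (forall f g, is_bounded_functional f -> is_bounded_functional g ->
        phi (fun x => f x + g x) = phi f + phi g) ->
    (forall a f, is_bounded_functional f -> phi (fun x => a * f x) = a * phi f) ->
    (exists C, forall f, is_bounded_functional f -> Rabs (phi f) <= C * dualnorm f) ->
    exists x0 : X, forall f, is_bounded_functional f -> phi f = f x0.

(* Compact linear operators: linear, and the image of the closed unit ball is
   relatively compact, i.e. (metric space) every sequence in it has a
   subsequence converging in Y. *)
Definition is_compact_op {X Y : NormedSpace} (T : X -> Y) : Prop :=
  is_linear T /\
  forall u : nat -> X, (forall n, vnorm (u n) <= 1) ->
    exists (phi : nat -> nat) (l : Y),
      (forall n, (phi n < phi (S n))%nat) /\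
      (forall eps, eps > 0 -> exists N, forall n, (n >= N)%nat ->
          vnorm (vsub (T (u (phi n))) l) < eps).

Definition unit_sphere {X : NormedSpace} (x : X) : Prop := vnorm x = 1.

Definition M_set {X Y : NormedSpace} (T : X -> Y) (x : X) : Prop :=
  unit_sphere x /\ vnorm (T x) = opnorm T.

Definition in_plus {Y : NormedSpace} (u v : Y) : Prop :=
  forall lam, lam >= 0 -> vnorm (vadd u (vscal lam v)) >= vnorm u.
Definition in_minus {Y : NormedSpace} (u v : Y) : Prop :=
  forall lam, lam <= 0 -> vnorm (vadd u (vscal lam v)) >= vnorm u.

Definition op_add_scal {X Y : NormedSpace} (T A : X -> Y) (lam : R) : X -> Y :=
  fun x => vadd (T x) (vscal lam (A x)).

Definition BJ_eps_orth {X Y : NormedSpace} (eps : R) (T A : X -> Y) : Prop :=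
  forall lam, opnorm (op_add_scal T A lam) >= sqrt (1 - eps ^ 2) * opnorm T.

(** A compact operator [S] on a reflexive space attains its norm: a maximising
   sequence [u n] in the unit ball may be chosen with [S (u n)] converging to
   some [y], [||y|| >= ||S||]. A Hahn-Banach extension of [f |-> limsup f (u n)]
   from the bounded functionals is a bounded functional on [X*], hence by
   reflexivity evaluation at some [x0] with [||x0|| <= 1]; testing it against
   [g o S], [g] a norming functional of [y], gives [||S x0|| >= ||y||].

   Since every [T + lam A] attains its norm, [T ⊥_D^eps A] produces the
   vectors [x_lam]; at a norm-attaining unit vector [x] of [T], convexity of
   the norm puts [A x] in [(T x)^+] or in [(T x)^-]. Conversely, for [lam] of
   the favourable sign that vector gives [||T + lam A|| >= ||T||], on the
   critical interval the [x_lam] do, and for the remaining [lam] the triangle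
   inequality [||T + lam A|| >= | |lam| ||A|| - ||T|| |] suffices. *)

From Stdlib Require Import Reals Lra Lia ClassicalEpsilon Classical FunctionalExtensionality.
From mathcomp Require classical_sets boolp.
Open Scope R_scope.

Definition Rinf (P : R -> Prop) : R :=
  - epsilon (inhabits 0) (fun r => is_lub (fun x => P (-x)) r).

Section Infimum.
Variable P : R -> Prop.

Lemma Rinf_is_glb : (exists x, P x) -> (exists m, forall x, P x -> m <= x) ->
  is_lub (fun x => P (-x)) (- Rinf P).
Proof.
  intros [x Hx] [m Hm]. unfold Rinf. rewrite Ropp_involutive. apply epsilon_spec.
  destruct (completeness (fun x => P (-x))) as [l Hl].
  - exists (-m). intros y Hy. apply Hm in Hy. lra.
  - exists (-x). rewrite Ropp_involutive. exact Hx.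
  - exists l. exact Hl.
Qed.

Lemma Rinf_le x : (exists m, forall x, P x -> m <= x) -> P x -> Rinf P <= x.
Proof.
  intros Hm Hx. destruct (Rinf_is_glb (ex_intro _ x Hx) Hm) as [Hub _].
  assert (Hx' : P (- - x)) by (rewrite Ropp_involutive; exact Hx).
  apply Hub in Hx'. lra.
Qed.

Lemma Rinf_ge c : (exists x, P x) -> (forall x, P x -> c <= x) -> c <= Rinf P.
Proof.
  intros Hx Hc. destruct (Rinf_is_glb Hx (ex_intro _ c Hc)) as [_ Hlub].
  enough (- Rinf P <= - c) by lra.
  apply Hlub. intros y Hy. apply Hc in Hy. lra.
Qed.
End Infimum.

Section HahnBanach.
Variable V : Type.
Variables (zero : V) (add : V -> V -> V) (scal : R -> V -> V).
Hypothesis add_assoc : forall x y z, add x (add y z) = add (add x y) z.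
Hypothesis add_comm : forall x y, add x y = add y x.
Hypothesis add_0 : forall x, add x zero = x.
Hypothesis scal_assoc : forall a b x, scal a (scal b x) = scal (a * b) x.
Hypothesis scal_1 : forall x, scal 1 x = x.
Hypothesis scal_addv : forall a x y, scal a (add x y) = add (scal a x) (scal a y).
Hypothesis scal_adds : forall a b x, scal (a + b) x = add (scal a x) (scal b x).
Hypothesis scal_0 : forall x, scal 0 x = zero.

Variable D : V -> Prop.
Hypothesis D_zero : D zero.
Hypothesis D_add : forall u v, D u -> D v -> D (add u v).
Hypothesis D_scal : forall a u, D u -> D (scal a u).

Definition sublinear (q : V -> R) : Prop :=
  (forall u v, D u -> D v -> q (add u v) <= q u + q v) /\
  (forall c u, 0 < c -> D u -> q (scal c u) = c * q u).

Definition linear_on (L : V -> R) : Prop :=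
  (forall u v, D u -> D v -> L (add u v) = L u + L v) /\
  (forall a u, D u -> L (scal a u) = a * L u).

Lemma scal_zero c : scal c zero = zero.
Proof. rewrite <- (scal_0 zero) at 1. rewrite scal_assoc, Rmult_0_r. apply scal_0. Qed.

Lemma add_scal_opp u : add u (scal (-1) u) = zero.
Proof.
  rewrite <- (scal_1 u) at 1. rewrite <- scal_adds. replace (1 + -1) with 0 by ring.
  apply scal_0.
Qed.

Lemma addACA a b c e : add (add a b) (add c e) = add (add a c) (add b e).
Proof. rewrite <- !add_assoc. f_equal. rewrite !add_assoc. f_equal. apply add_comm. Qed.

Lemma add_scal_addK v w : add (add v w) (scal (-1) v) = w.
Proof. rewrite (add_comm v), <- add_assoc, add_scal_opp. apply add_0. Qed.

Section Sublinear.
Variable q : V -> R.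
Hypothesis q_sublinear : sublinear q.

Lemma sublinear0 : q zero = 0.
Proof.
  assert (E := proj2 q_sublinear 2 zero ltac:(lra) D_zero). rewrite scal_zero in E. lra.
Qed.

Lemma sublinear_homo t u : 0 <= t -> D u -> q (scal t u) = t * q u.
Proof.
  intros Ht Du. destruct (Rle_lt_or_eq_dec 0 t Ht) as [Hlt|<-].
  - apply (proj2 q_sublinear); auto.
  - rewrite scal_0, sublinear0. ring.
Qed.

Lemma sublinear_opp_le u : D u -> - q (scal (-1) u) <= q u.
Proof.
  intros Du. assert (E := proj1 q_sublinear u (scal (-1) u) Du (D_scal _ _ Du)).
  rewrite add_scal_opp, sublinear0 in E. lra.
Qed.

(* A minimal dominated sublinear functional coincides with all its shifts,
   which forces it to be linear. *)
Definition shift (a v : V) : R :=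
  Rinf (fun r => exists t, 0 <= t /\ r = q (add v (scal t a)) - t * q a).

Variable a : V.
Hypothesis Da : D a.

Lemma shift_le v t : D v -> 0 <= t -> shift a v <= q (add v (scal t a)) - t * q a.
Proof.
  intros Dv Ht. apply Rinf_le; [|eauto].
  exists (- q (scal (-1) v)). intros x [s [Hs ->]].
  rewrite <- (sublinear_homo s a Hs Da).
  assert (E := proj1 q_sublinear (add v (scal s a)) (scal (-1) v)
                 (D_add _ _ Dv (D_scal _ _ Da)) (D_scal _ _ Dv)).
  rewrite add_scal_addK in E. lra.
Qed.

Lemma shift_ge v c : (forall t, 0 <= t -> c <= q (add v (scal t a)) - t * q a) ->
  c <= shift a v.
Proof.
  intros H. apply Rinf_ge; [|intros x [t [Ht ->]]; auto].
  exists (q (add v (scal 0 a)) - 0 * q a). exists 0. split; [lra|reflexivity].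
Qed.

Lemma shift_le_self v : D v -> shift a v <= q v.
Proof.
  intros Dv. assert (E := shift_le v 0 Dv (Rle_refl 0)).
  rewrite scal_0, add_0 in E. lra.
Qed.

Lemma shift_sublinear : sublinear (shift a).
Proof.
  split.
  - intros u v Du Dv.
    assert (K : forall s t, 0 <= s -> 0 <= t -> shift a (add u v) <=
      (q (add u (scal s a)) - s * q a) + (q (add v (scal t a)) - t * q a)).
    { intros s t Hs Ht. eapply Rle_trans; [apply (shift_le (add u v) (s + t)); auto; lra|].
      rewrite scal_adds, addACA.
      assert (E := proj1 q_sublinear (add u (scal s a)) (add v (scal t a))
                     (D_add _ _ Du (D_scal _ _ Da)) (D_add _ _ Dv (D_scal _ _ Da))).
      lra. }
    assert (K2 : forall t, 0 <= t ->
      shift a (add u v) - (q (add v (scal t a)) - t * q a) <= shift a u).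
    { intros t Ht. apply shift_ge. intros s Hs. specialize (K s t Hs Ht). lra. }
    enough (shift a (add u v) - shift a u <= shift a v) by lra.
    apply shift_ge. intros t Ht. specialize (K2 t Ht). lra.
  - intros c v Hc Dv.
    assert (Hhom : forall t, q (add (scal c v) (scal (c * t) a)) = c * q (add v (scal t a))).
    { intros t. rewrite <- scal_assoc, <- scal_addv.
      apply (proj2 q_sublinear); auto. }
    apply Rle_antisym.
    + enough (shift a (scal c v) / c <= shift a v).
      { apply (Rmult_le_compat_l c) in H; [|lra].
        replace (c * (shift a (scal c v) / c)) with (shift a (scal c v)) in H by (field; lra).
        lra. }
      apply shift_ge. intros t Ht.
      assert (E := shift_le (scal c v) (c * t) (D_scal _ _ Dv) ltac:(nra)).
      rewrite Hhom in E. apply (Rmult_le_reg_l c); auto.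
      replace (c * (shift a (scal c v) / c)) with (shift a (scal c v)) by (field; lra). lra.
    + apply shift_ge. intros t Ht.
      assert (Htc : 0 <= t / c) by (unfold Rdiv; apply Rmult_le_pos; [lra|apply Rlt_le, Rinv_0_lt_compat; lra]).
      assert (E := shift_le v (t / c) Dv Htc).
      apply (Rmult_le_compat_l c) in E; [|lra].
      assert (Eq := Hhom (t / c)). replace (c * (t / c)) with t in Eq by (field; lra).
      assert (Eqa : c * (t / c * q a) = t * q a) by (field; lra).
      rewrite Eq. rewrite Rmult_minus_distr_l, Eqa in E. lra.
Qed.
End Sublinear.

Lemma sublinear_le_shift_linear q : sublinear q ->
  (forall a v, D a -> D v -> q v <= shift q a v) -> linear_on q.
Proof.
  intros Hq Hmin.
  assert (Hadd : forall u v, D u -> D v -> q (add u v) = q u + q v).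
  { intros u v Du Dv. apply Rle_antisym; [apply (proj1 Hq); auto|].
    assert (E := shift_le q Hq v Dv u 1 Du ltac:(lra)).
    rewrite scal_1 in E. specialize (Hmin v u Dv Du). lra. }
  assert (Hopp : forall u, D u -> q (scal (-1) u) = - q u).
  { intros u Du. assert (E := Hadd u (scal (-1) u) Du (D_scal _ _ Du)).
    rewrite add_scal_opp, (sublinear0 q Hq) in E. lra. }
  split; auto.
  intros c u Du. destruct (Rle_or_lt 0 c) as [Hc|Hc].
  - apply sublinear_homo; auto.
  - replace (scal c u) with (scal (-1) (scal (-c) u)) by (rewrite scal_assoc; f_equal; ring).
    rewrite Hopp by auto. rewrite (proj2 Hq (-c) u ltac:(lra) Du). ring.
Qed.

Section Dominated.
Variable p : V -> R.
Hypothesis p_sublinear : sublinear p.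

Definition dominated (q : V -> R) : Prop := sublinear q /\ forall u, D u -> q u <= p u.

Lemma dominated_chain_inf (C : (V -> R) -> Prop) q0 : C q0 ->
  (forall q1 q2, C q1 -> C q2 ->
     (forall u, D u -> q1 u <= q2 u) \/ (forall u, D u -> q2 u <= q1 u)) ->
  (forall q, C q -> dominated q) ->
  exists qi, dominated qi /\ forall q u, C q -> D u -> qi u <= q u.
Proof.
  intros Cq0 Ctot Cdom.
  set (qi := fun u => Rinf (fun r => exists q, C q /\ r = q u)).
  assert (Hne : forall u, exists r, exists q, C q /\ r = q u) by (intros u; eauto).
  assert (Hle : forall q u, C q -> D u -> qi u <= q u).
  { intros q u Cq Du. apply Rinf_le; [|eauto].
    exists (- p (scal (-1) u)). intros x [q' [Cq' ->]].
    destruct (Cdom q' Cq') as [Hq' Hq'p].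
    assert (E := sublinear_opp_le q' Hq' u Du). specialize (Hq'p _ (D_scal (-1) u Du)). lra. }
  assert (Hge : forall u c, (forall q, C q -> c <= q u) -> c <= qi u).
  { intros u c H. apply Rinf_ge; auto. intros x [q [Cq ->]]. auto. }
  exists qi. split; [split; [split|]|]; auto.
  - intros u v Du Dv.
    assert (K : forall q1 q2, C q1 -> C q2 -> qi (add u v) <= q1 u + q2 v).
    { intros q1 q2 C1 C2.
      assert (Hmin : exists q, C q /\ (forall w, D w -> q w <= q1 w) /\ (forall w, D w -> q w <= q2 w)).
      { destruct (Ctot q1 q2 C1 C2) as [H|H].
        - exists q1. repeat split; auto. intros; lra.
        - exists q2. repeat split; auto. intros; lra. }
      destruct Hmin as [q [Cq [H1 H2]]].
      eapply Rle_trans; [apply (Hle q); auto|].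
      assert (E := proj1 (proj1 (Cdom q Cq)) u v Du Dv).
      specialize (H1 u Du). specialize (H2 v Dv). lra. }
    assert (K2 : forall q2, C q2 -> qi (add u v) - q2 v <= qi u).
    { intros q2 C2. apply Hge. intros q1 C1. specialize (K q1 q2 C1 C2). lra. }
    enough (qi (add u v) - qi u <= qi v) by lra.
    apply Hge. intros q2 C2. specialize (K2 q2 C2). lra.
  - intros c u Hc Du.
    assert (Hhom : forall q, C q -> q (scal c u) = c * q u)
      by (intros q Cq; apply (proj2 (proj1 (Cdom q Cq))); auto).
    apply Rle_antisym.
    + enough (qi (scal c u) / c <= qi u).
      { apply (Rmult_le_compat_l c) in H; [|lra].
        replace (c * (qi (scal c u) / c)) with (qi (scal c u)) in H by (field; lra). lra. }
      apply Hge. intros q Cq. assert (E := Hle q _ Cq (D_scal c u Du)).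
      rewrite (Hhom q Cq) in E. apply (Rmult_le_reg_l c); auto.
      replace (c * (qi (scal c u) / c)) with (qi (scal c u)) by (field; lra). lra.
    + apply Hge. intros q Cq. assert (E := Hle q _ Cq Du). rewrite (Hhom q Cq). nra.
  - intros u Du. eapply Rle_trans; [apply (Hle q0); auto|]. apply (Cdom q0 Cq0); auto.
Qed.

Theorem hahn_banach : exists L, linear_on L /\ forall u, D u -> L u <= p u.
Proof.
  set (Dom := {q : V -> R | dominated q}).
  set (below := fun s t : Dom => boolp.asbool (forall u, D u -> proj1_sig t u <= proj1_sig s u)).
  set (t0 := exist dominated p (conj p_sublinear (fun u _ => Rle_refl _)) : Dom).
  destruct (@classical_sets.ZL_preorder Dom t0 below) as [[q [Hq qp]] Hmax].
  - intros t. apply boolp.asboolT. intros; lra.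
  - intros r s t H1 H2. apply boolp.asboolT.
    apply boolp.asboolW in H1. apply boolp.asboolW in H2.
    intros u Du. specialize (H1 u Du). specialize (H2 u Du). lra.
  - intros Ch Chtot. destruct (classic (exists s, Ch s)) as [[s0 Chs0]|Hempty].
    2:{ exists t0. intros s Chs. exfalso. apply Hempty. eauto. }
    destruct (dominated_chain_inf (fun q => exists s : Dom, Ch s /\ q = proj1_sig s) (proj1_sig s0))
      as [qi [Hqi Hqile]].
    + eauto.
    + intros q1 q2 [s1 [C1 ->]] [s2 [C2 ->]].
      destruct (Chtot s1 s2 C1 C2) as [H|H]; apply boolp.asboolW in H; auto.
    + intros q [s [_ ->]]. apply proj2_sig.
    + exists (exist dominated qi Hqi). intros s Chs. apply boolp.asboolT. simpl.
      intros u Du. apply Hqile; eauto.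
  - exists q. split; auto. apply sublinear_le_shift_linear; auto.
    intros a v Da Dv.
    set (qa := exist dominated (shift q a)
      (conj (shift_sublinear q Hq a Da)
            (fun u Du => Rle_trans _ _ _ (shift_le_self q Hq a Da u Du) (qp u Du))) : Dom).
    assert (Hqa : is_true (below (exist _ q (conj Hq qp)) qa)).
    { apply boolp.asboolT. simpl. intros u Du. apply shift_le_self; auto. }
    specialize (Hmax qa Hqa). apply boolp.asboolW in Hmax. apply Hmax; auto.
Qed.
End Dominated.

Corollary hahn_banach_at p z : sublinear p -> D z ->
  exists L, linear_on L /\ (forall u, D u -> L u <= p u) /\ L z = p z.
Proof.
  intros Hp Dz. destruct (hahn_banach (shift p z) (shift_sublinear p Hp z Dz)) as [L [HL HLp]].
  exists L. split; [|split]; auto.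
  - intros u Du. eapply Rle_trans; [apply HLp; auto|]. apply shift_le_self; auto.
  - assert (E := HLp (scal (-1) z) (D_scal _ _ Dz)).
    assert (E2 := shift_le p Hp z Dz (scal (-1) z) 1 (D_scal _ _ Dz) ltac:(lra)).
    rewrite scal_1, add_comm, add_scal_opp, (sublinear0 p Hp) in E2.
    rewrite (proj2 HL) in E by auto.
    assert (E3 := HLp z Dz). assert (E4 := shift_le_self p Hp z Dz z Dz). lra.
Qed.
End HahnBanach.

Lemma Rabs_m1 : Rabs (-1) = 1.
Proof. unfold Rabs; destruct (Rcase_abs (-1)); lra. Qed.

Lemma Rabs_le_inv x c : Rabs x <= c -> - c <= x <= c.
Proof. unfold Rabs; destruct (Rcase_abs x); intros; lra. Qed.

Section NormedSpaceFacts.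
Variable X : NormedSpace.

Lemma vscal0 (x : X) : vscal 0 x = vzero.
Proof. apply vnorm_eq0. rewrite vnorm_scal, Rabs_R0. ring. Qed.

Lemma vnorm0 : vnorm (@vzero X) = 0.
Proof. rewrite <- (vscal0 vzero), vnorm_scal, Rabs_R0. ring. Qed.

Lemma vadd_scal_opp (x : X) : vadd x (vscal (-1) x) = vzero.
Proof.
  rewrite <- (vscal_1 _ x) at 1. rewrite <- vscal_adds. replace (1 + -1) with 0 by ring.
  apply vscal0.
Qed.

Lemma vnorm_scal_opp (x : X) : vnorm (vscal (-1) x) = vnorm x.
Proof. rewrite vnorm_scal, Rabs_m1. ring. Qed.

Lemma vnorm_ge0 (x : X) : 0 <= vnorm x.
Proof.
  assert (E := vnorm_triangle _ x (vscal (-1) x)).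
  rewrite vadd_scal_opp, vnorm0, vnorm_scal_opp in E. lra.
Qed.

Lemma vopp_scal (x : X) : vopp x = vscal (-1) x.
Proof.
  rewrite <- (vadd_0 _ (vopp x)), <- (vadd_scal_opp x), vadd_assoc,
    (vadd_comm _ (vopp x) x), vadd_opp, vadd_comm.
  apply vadd_0.
Qed.

Lemma vaddACA (a b c e : X) : vadd (vadd a b) (vadd c e) = vadd (vadd a c) (vadd b e).
Proof. rewrite <- !vadd_assoc. f_equal. rewrite !vadd_assoc. f_equal. apply vadd_comm. Qed.

Lemma vadd_subK (y a : X) : vadd y (vsub a y) = a.
Proof.
  unfold vsub. rewrite (vadd_comm _ a), vadd_assoc, vadd_opp, vadd_comm. apply vadd_0.
Qed.

Lemma vnorm_le_sub (a y : X) : vnorm a <= vnorm y + vnorm (vsub a y).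
Proof. rewrite <- (vadd_subK y a) at 1. apply vnorm_triangle. Qed.

Lemma vsub_add (a b c d : X) : vsub (vadd a b) (vadd c d) = vadd (vsub a c) (vsub b d).
Proof. unfold vsub. rewrite !vopp_scal, vscal_addv. apply vaddACA. Qed.

Lemma vsub_scal l (b d : X) : vsub (vscal l b) (vscal l d) = vscal l (vsub b d).
Proof. unfold vsub. rewrite !vopp_scal, vscal_addv, !vscal_assoc, Rmult_comm. reflexivity. Qed.

Lemma vadd_scalK (a b : X) l : vadd (vadd a (vscal l b)) (vscal (-l) b) = a.
Proof.
  rewrite <- vadd_assoc, <- vscal_adds. replace (l + - l) with 0 by ring.
  rewrite vscal0. apply vadd_0.
Qed.

Lemma vadd_scal_oppK (v w : X) : vadd (vadd v w) (vscal (-1) v) = w.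
Proof. rewrite (vadd_comm _ v w), <- vadd_assoc, vadd_scal_opp. apply vadd_0. Qed.

(* [u] is a convex combination of [u + l1 w] and [u + l2 w] when [l1 > 0 > l2]. *)
Lemma in_plus_or_in_minus (u w : X) : in_plus u w \/ in_minus u w.
Proof.
  apply NNPP. intros Hn. apply not_or_and in Hn. destruct Hn as [Hp Hm].
  apply not_all_ex_not in Hp. destruct Hp as [l1 Hp]. apply imply_to_and in Hp.
  apply not_all_ex_not in Hm. destruct Hm as [l2 Hm]. apply imply_to_and in Hm.
  destruct Hp as [Hl1 Hp], Hm as [Hl2 Hm]. apply Rnot_ge_lt in Hp, Hm.
  assert (l1 <> 0) by (intros ->; rewrite vscal0, vadd_0 in Hp; lra).
  assert (l2 <> 0) by (intros ->; rewrite vscal0, vadd_0 in Hm; lra).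
  set (al := - l2 / (l1 - l2)). set (be := l1 / (l1 - l2)).
  assert (Hal : 0 < al) by (unfold al; apply Rdiv_lt_0_compat; lra).
  assert (Hbe : 0 < be) by (unfold be; apply Rdiv_lt_0_compat; lra).
  assert (Hs : al + be = 1) by (unfold al, be; field; lra).
  assert (Hz : al * l1 + be * l2 = 0) by (unfold al, be; field; lra).
  assert (Id : vadd (vscal al (vadd u (vscal l1 w))) (vscal be (vadd u (vscal l2 w))) = u).
  { rewrite !vscal_addv, !vscal_assoc, vaddACA, <- !vscal_adds, Hs, Hz, vscal0, vscal_1.
    apply vadd_0. }
  assert (E := vnorm_triangle _ (vscal al (vadd u (vscal l1 w))) (vscal be (vadd u (vscal l2 w)))).
  rewrite Id, !vnorm_scal, !Rabs_right in E by lra. nra.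
Qed.

Section SupBall.
Variable g : X -> R.
Hypothesis g_bounded : exists C, forall x : X, vnorm x <= 1 -> g x <= C.

Lemma sup_ball_lub : is_lub (fun s => exists x : X, vnorm x <= 1 /\ s = g x) (sup_ball g).
Proof.
  unfold sup_ball. apply epsilon_spec.
  destruct (completeness (fun s => exists x : X, vnorm x <= 1 /\ s = g x)) as [l Hl].
  - destruct g_bounded as [C HC]. exists C. intros s [x [Hx ->]]. auto.
  - exists (g vzero). exists vzero. rewrite vnorm0. split; [lra|reflexivity].
  - exists l; auto.
Qed.

Lemma sup_ball_ge x : vnorm x <= 1 -> g x <= sup_ball g.
Proof. intros Hx. apply (proj1 sup_ball_lub). eauto. Qed.

Lemma sup_ball_le c : (forall x, vnorm x <= 1 -> g x <= c) -> sup_ball g <= c.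
Proof. intros H. apply (proj2 sup_ball_lub). intros s [x [Hx ->]]. auto. Qed.

Lemma sup_ball_approx e : 0 < e -> exists x, vnorm x <= 1 /\ sup_ball g - e < g x.
Proof.
  intros He. apply NNPP. intros Hn.
  enough (sup_ball g <= sup_ball g - e) by lra.
  apply sup_ball_le. intros x Hx. apply Rnot_lt_le. intros Hl. apply Hn. eauto.
Qed.

Hypothesis g_homo : forall a x, g (vscal a x) = Rabs a * g x.

Lemma sup_ball_homo x : g x <= sup_ball g * vnorm x.
Proof.
  assert (g0 : g vzero = 0) by (rewrite <- (vscal0 vzero), g_homo, Rabs_R0; ring).
  destruct (Req_dec (vnorm x) 0) as [H0|H0].
  - apply vnorm_eq0 in H0. subst x. rewrite g0, vnorm0. lra.
  - assert (Hp : 0 < vnorm x) by (assert (H := vnorm_ge0 x); lra).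
    assert (E := sup_ball_ge (vscal (/ vnorm x) x)).
    rewrite vnorm_scal, g_homo, Rabs_right, Rinv_l in E
      by (lra || apply Rle_ge, Rlt_le, Rinv_0_lt_compat; auto).
    specialize (E (Rle_refl 1)).
    apply (Rmult_le_compat_l (vnorm x)) in E; [|lra].
    rewrite <- Rmult_assoc, Rinv_r in E by lra. lra.
Qed.
End SupBall.

Lemma norming_functional (z : X) : exists f : X -> R,
  (forall a b, f (vadd a b) = f a + f b) /\ (forall c a, f (vscal c a) = c * f a) /\
  (forall v, Rabs (f v) <= vnorm v) /\ f z = vnorm z.
Proof.
  destruct (hahn_banach_at X vzero vadd vscal (vadd_assoc X) (vadd_comm X) (vadd_0 X)
    (vscal_assoc X) (vscal_1 X) (vscal_addv X) (vscal_adds X) vscal0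
    (fun _ => True) I (fun _ _ _ _ => I) (fun _ _ _ => I) vnorm z)
    as [f [[Hadd Hscal] [Hle Hz]]]; auto.
  - split; [intros; apply vnorm_triangle|].
    intros c u Hc _. rewrite vnorm_scal, Rabs_right; lra.
  - exists f. repeat split; auto.
    intros v. apply Rabs_le. split.
    + assert (E := Hle (vscal (-1) v) I). rewrite Hscal, vnorm_scal_opp in E by auto. lra.
    + apply Hle; auto.
Qed.
End NormedSpaceFacts.

Definition eventually_le (w : nat -> R) (b : R) : Prop :=
  exists N, forall n, (n >= N)%nat -> w n <= b.

Definition limsup (w : nat -> R) : R := Rinf (eventually_le w).

Definition bounded_seq (w : nat -> R) : Prop := exists C, forall n, Rabs (w n) <= C.

Section LimsupBounds.
Variable w : nat -> R.
Hypothesis w_bounded : bounded_seq w.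

Lemma limsup_le b : eventually_le w b -> limsup w <= b.
Proof.
  intros Hb. apply Rinf_le; auto. destruct w_bounded as [C HC]. exists (-C).
  intros b' [N HN]. specialize (HN N (le_n _)). specialize (HC N).
  apply Rabs_le_inv in HC. lra.
Qed.

Lemma limsup_ge c : (forall b, eventually_le w b -> c <= b) -> c <= limsup w.
Proof.
  intros H. apply Rinf_ge; auto. destruct w_bounded as [C HC]. exists C, 0%nat.
  intros n _. specialize (HC n). apply Rabs_le_inv in HC. lra.
Qed.

Lemma bounded_seq_scal c : bounded_seq (fun n => c * w n).
Proof.
  destruct w_bounded as [Cw Hw]. exists (Rabs c * Cw). intros n.
  rewrite Rabs_mult. apply Rmult_le_compat_l; auto. apply Rabs_pos.
Qed.
End LimsupBounds.

Section Limsup.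
Variables w v : nat -> R.
Hypothesis w_bounded : bounded_seq w.
Hypothesis v_bounded : bounded_seq v.

Lemma bounded_seq_add : bounded_seq (fun n => w n + v n).
Proof.
  destruct w_bounded as [Cw Hw], v_bounded as [Cv Hv]. exists (Cw + Cv). intros n.
  eapply Rle_trans; [apply Rabs_triang|]. specialize (Hw n). specialize (Hv n). lra.
Qed.

Lemma limsup_add : limsup (fun n => w n + v n) <= limsup w + limsup v.
Proof.
  assert (K : forall b1 b2, eventually_le w b1 -> eventually_le v b2 ->
     limsup (fun n => w n + v n) <= b1 + b2).
  { intros b1 b2 [N1 H1] [N2 H2]. apply limsup_le; [apply bounded_seq_add|].
    exists (max N1 N2). intros n Hn.
    specialize (H1 n ltac:(lia)). specialize (H2 n ltac:(lia)). lra. }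
  assert (K2 : forall b2, eventually_le v b2 -> limsup (fun n => w n + v n) - b2 <= limsup w).
  { intros b2 Hb2. apply limsup_ge; auto. intros b1 Hb1. specialize (K b1 b2 Hb1 Hb2). lra. }
  enough (limsup (fun n => w n + v n) - limsup w <= limsup v) by lra.
  apply limsup_ge; auto. intros b2 Hb2. specialize (K2 b2 Hb2). lra.
Qed.
End Limsup.

Lemma limsup_scal w c : bounded_seq w -> 0 < c -> limsup (fun n => c * w n) = c * limsup w.
Proof.
  intros w_bounded Hc. apply Rle_antisym.
  - enough (limsup (fun n => c * w n) / c <= limsup w).
    { apply (Rmult_le_compat_l c) in H; [|lra].
      replace (c * (limsup (fun n => c * w n) / c)) with (limsup (fun n => c * w n)) in H
        by (field; lra). lra. }
    apply limsup_ge; auto. intros b [N HN].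
    assert (E : limsup (fun n => c * w n) <= c * b).
    { apply limsup_le; [apply bounded_seq_scal; auto|]. exists N. intros n Hn.
      specialize (HN n Hn). nra. }
    apply (Rmult_le_reg_l c); auto.
    replace (c * (limsup (fun n => c * w n) / c)) with (limsup (fun n => c * w n))
      by (field; lra). lra.
  - apply limsup_ge; [apply bounded_seq_scal; auto|]. intros b [N HN].
    assert (E : limsup w <= b / c).
    { apply limsup_le; auto. exists N. intros n Hn. specialize (HN n Hn).
      apply (Rmult_le_reg_l c); auto. replace (c * (b / c)) with b by (field; lra). lra. }
    apply (Rmult_le_compat_l c) in E; [|lra].
    replace (c * (b / c)) with b in E by (field; lra). lra.
Qed.

Section BoundedFunctionals.
Variable X : NormedSpace.

Lemma bounded_functional_zero : @is_bounded_functional X (fun _ => 0).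
Proof.
  split; [intros; ring|split; [intros; ring|]]. exists 0. intros x.
  rewrite Rabs_R0. assert (H := vnorm_ge0 X x). lra.
Qed.

Lemma bounded_functional_add (f g : X -> R) : is_bounded_functional f ->
  is_bounded_functional g -> is_bounded_functional (fun x => f x + g x).
Proof.
  intros [fa [fs [Cf HCf]]] [ga [gs [Cg HCg]]].
  split; [intros; rewrite fa, ga; ring|]. split; [intros; rewrite fs, gs; ring|].
  exists (Cf + Cg). intros x. eapply Rle_trans; [apply Rabs_triang|].
  specialize (HCf x). specialize (HCg x). lra.
Qed.

Lemma bounded_functional_scal a (f : X -> R) : is_bounded_functional f ->
  is_bounded_functional (fun x => a * f x).
Proof.
  intros [fa [fs [Cf HCf]]]. split; [intros; rewrite fa; ring|].
  split; [intros; rewrite fs; ring|]. exists (Rabs a * Cf). intros x.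
  rewrite Rabs_mult, Rmult_assoc. apply Rmult_le_compat_l; auto. apply Rabs_pos.
Qed.

Lemma bounded_functional_ball (f : X -> R) : is_bounded_functional f ->
  exists C, forall x, vnorm x <= 1 -> Rabs (f x) <= C.
Proof.
  intros [_ [_ [C HC]]]. exists (Rabs C). intros x Hx. eapply Rle_trans; [apply HC|].
  assert (0 <= vnorm x) by apply vnorm_ge0. assert (C <= Rabs C) by apply RRle_abs.
  assert (0 <= Rabs C) by apply Rabs_pos. nra.
Qed.
End BoundedFunctionals.

(* A Banach limit of [u]: a linear functional on [X*] bounded by the limsup of
   [f (u n)]; it plays the role of a weak cluster point of [u] in [X**]. *)
Definition is_banach_limit {X : NormedSpace} (u : nat -> X) (L : (X -> R) -> R) : Prop :=
  (forall f g, is_bounded_functional f -> is_bounded_functional g ->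
     L (fun x => f x + g x) = L f + L g) /\
  (forall a f, is_bounded_functional f -> L (fun x => a * f x) = a * L f) /\
  (forall f, is_bounded_functional f -> L f <= limsup (fun n => f (u n))).

Section BanachLimit.
Variable X : NormedSpace.
Variable u : nat -> X.
Hypothesis u_ball : forall n, vnorm (u n) <= 1.

Lemma bounded_functional_seq f : is_bounded_functional f -> bounded_seq (fun n => f (u n)).
Proof.
  intros Hf. destruct (bounded_functional_ball X f Hf) as [C HC]. exists C. auto.
Qed.

Lemma banach_limit_exists : exists L, is_banach_limit u L.
Proof.
  destruct (hahn_banach (X -> R) (fun _ => 0) (fun f g x => f x + g x) (fun a f x => a * f x))
    with (D := @is_bounded_functional X) (p := fun f => limsup (fun n => f (u n)))
    as [L [[La Ls] Lp]];
    try (intros; apply functional_extensionality; intros; ring).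
  - apply bounded_functional_zero.
  - apply bounded_functional_add.
  - apply bounded_functional_scal.
  - split.
    + intros f g Hf Hg. apply limsup_add; apply bounded_functional_seq; auto.
    + intros c f Hc Hf. apply limsup_scal; auto. apply bounded_functional_seq; auto.
  - exists L. repeat split; auto.
Qed.

Variable L : (X -> R) -> R.
Hypothesis L_banach : is_banach_limit u L.

Lemma banach_limit_le f b : is_bounded_functional f ->
  eventually_le (fun n => f (u n)) b -> L f <= b.
Proof.
  intros Hf Hb. eapply Rle_trans; [apply L_banach; auto|].
  apply limsup_le; auto. apply bounded_functional_seq; auto.
Qed.

Lemma banach_limit_ge f b : is_bounded_functional f ->
  eventually_le (fun n => - f (u n)) (- b) -> b <= L f.
Proof.
  intros Hf [N HN].
  assert (E := banach_limit_le (fun x => -1 * f x) (- b) (bounded_functional_scal X (-1) f Hf)).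
  destruct L_banach as [_ [Ls _]]. rewrite Ls in E by auto.
  enough (-1 * L f <= - b) by lra.
  apply E. exists N. intros n Hn. specialize (HN n Hn). lra.
Qed.

Lemma banach_limit_abs_le f B : is_bounded_functional f ->
  (forall n, Rabs (f (u n)) <= B) -> Rabs (L f) <= B.
Proof.
  intros Hf HB. apply Rabs_le. split.
  - apply banach_limit_ge; auto. exists 0%nat. intros n _.
    specialize (HB n). apply Rabs_le_inv in HB. lra.
  - apply banach_limit_le; auto. exists 0%nat. intros n _.
    specialize (HB n). apply Rabs_le_inv in HB. lra.
Qed.

Lemma banach_limit_converges f c : is_bounded_functional f ->
  (forall e, 0 < e -> exists N, forall n, (n >= N)%nat -> Rabs (f (u n) - c) <= e) ->
  L f = c.
Proof.
  intros Hf Hc. apply Rle_antisym; apply Rle_plus_epsilon; intros e He;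
    destruct (Hc e He) as [N HN].
  - apply banach_limit_le; auto. exists N. intros n Hn.
    specialize (HN n Hn). apply Rabs_le_inv in HN. lra.
  - enough (c - e <= L f) by lra. apply banach_limit_ge; auto. exists N. intros n Hn.
    specialize (HN n Hn). apply Rabs_le_inv in HN. lra.
Qed.
End BanachLimit.

Definition converges_to {Y : NormedSpace} (v : nat -> Y) (y : Y) : Prop :=
  forall e, e > 0 -> exists N, forall n, (n >= N)%nat -> vnorm (vsub (v n) y) < e.

Lemma strict_mono_ge (phi : nat -> nat) : (forall n, (phi n < phi (S n))%nat) ->
  forall n, (n <= phi n)%nat.
Proof. intros H n. induction n; [lia|]. specialize (H n). lia. Qed.

Lemma INR_inv_lt e : 0 < e -> exists k : nat, / (INR k + 1) < e.
Proof.
  intros He. destruct (INR_archimed e 1 He) as [k Hk]. exists k.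
  assert (0 <= INR k) by apply pos_INR.
  apply (Rmult_lt_reg_l (INR k + 1)); [lra|]. rewrite Rinv_r by lra. nra.
Qed.

Section CompactOperator.
Variables X Y : NormedSpace.
Variable S : X -> Y.
Hypothesis S_compact : is_compact_op S.

Let S_linear : is_linear S := proj1 S_compact.

Lemma compact_op_bounded : exists C, forall x, vnorm x <= 1 -> vnorm (S x) <= C.
Proof.
  apply NNPP. intros Hn.
  assert (H : forall n : nat, exists x, vnorm x <= 1 /\ INR n < vnorm (S x)).
  { intros n. apply NNPP. intros Hn2. apply Hn. exists (INR n). intros x Hx.
    apply Rnot_lt_le. intros Hl. apply Hn2. eauto. }
  apply choice in H. destruct H as [u Hu].
  destruct (proj2 S_compact u (fun n => proj1 (Hu n))) as [phi [l [Hphi Hc]]].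
  destruct (Hc 1 ltac:(lra)) as [N HN].
  destruct (INR_archimed 1 (vnorm l + 1) ltac:(lra)) as [k Hk].
  set (n := max N k). specialize (HN n ltac:(lia)).
  assert (E1 := vnorm_le_sub _ (S (u (phi n))) l).
  assert (E2 := proj2 (Hu (phi n))).
  assert (E3 : INR k <= INR (phi n)) by (apply le_INR; assert (G := strict_mono_ge phi Hphi n); lia).
  lra.
Qed.

Lemma opnorm_ge x : vnorm x <= 1 -> vnorm (S x) <= opnorm S.
Proof. apply (sup_ball_ge X (fun x => vnorm (S x)) compact_op_bounded). Qed.

Lemma opnorm_le c : (forall x, vnorm x <= 1 -> vnorm (S x) <= c) -> opnorm S <= c.
Proof. apply (sup_ball_le X (fun x => vnorm (S x)) compact_op_bounded). Qed.

Lemma opnorm_homo x : vnorm (S x) <= opnorm S * vnorm x.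
Proof.
  apply (sup_ball_homo X (fun x => vnorm (S x)) compact_op_bounded).
  intros a y. rewrite (proj2 S_linear). apply vnorm_scal.
Qed.

Lemma opnorm_ge0 : 0 <= opnorm S.
Proof. assert (E := opnorm_ge vzero). rewrite vnorm0 in E. assert (H := vnorm_ge0 _ (S vzero)). lra. Qed.

Lemma opnorm_scal_le c B : 0 <= c ->
  (forall x, vnorm x <= 1 -> c * vnorm (S x) <= B) -> c * opnorm S <= B.
Proof.
  intros Hc HB. destruct (Rle_lt_or_eq_dec 0 c Hc) as [Hcp|<-].
  - enough (opnorm S <= B / c).
    { apply (Rmult_le_compat_l c) in H; [|lra].
      replace (c * (B / c)) with B in H by (field; lra). lra. }
    apply opnorm_le. intros x Hx. apply (Rmult_le_reg_l c); auto.
    replace (c * (B / c)) with B by (field; lra). auto.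
  - assert (E := HB vzero). rewrite vnorm0 in E. lra.
Qed.

Lemma maximising_sequence : exists (u : nat -> X) (y : Y),
  (forall n, vnorm (u n) <= 1) /\ converges_to (fun n => S (u n)) y /\ opnorm S <= vnorm y.
Proof.
  assert (H : forall n : nat, exists x, vnorm x <= 1 /\ opnorm S - / (INR n + 1) < vnorm (S x)).
  { intros n. apply (sup_ball_approx X (fun x => vnorm (S x)) compact_op_bounded).
    apply Rinv_0_lt_compat. assert (0 <= INR n) by apply pos_INR. lra. }
  apply choice in H. destruct H as [xs Hxs].
  destruct (proj2 S_compact xs (fun n => proj1 (Hxs n))) as [phi [y [Hphi Hc]]].
  exists (fun n => xs (phi n)), y. split; [intros; apply Hxs|]. split; [exact Hc|].
  apply Rnot_lt_le. intros Hlt. set (e := (opnorm S - vnorm y) / 2).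
  destruct (INR_inv_lt e ltac:(unfold e; lra)) as [k Hk].
  destruct (Hc e ltac:(unfold e; lra)) as [N HN].
  set (n := max N k). specialize (HN n ltac:(lia)).
  assert (E1 := vnorm_le_sub _ (S (xs (phi n))) y).
  assert (E2 := proj2 (Hxs (phi n))).
  assert (E3 : INR k <= INR (phi n)) by (apply le_INR; assert (G := strict_mono_ge phi Hphi n); lia).
  assert (E4 : / (INR (phi n) + 1) <= / (INR k + 1)).
  { apply Rinv_le_contravar; [assert (0 <= INR k) by apply pos_INR|]; lra. }
  unfold e in *. lra.
Qed.

Hypothesis X_reflexive : is_reflexive X.

Lemma reflexive_cluster_point (u : nat -> X) (y : Y) : (forall n, vnorm (u n) <= 1) ->
  converges_to (fun n => S (u n)) y -> exists x0, vnorm x0 <= 1 /\ vnorm y <= vnorm (S x0).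
Proof.
  intros Hu Hc. destruct (banach_limit_exists X u Hu) as [L HL].
  destruct (X_reflexive L) as [x0 Hx0]; try apply HL.
  - exists 1. intros f Hf. rewrite Rmult_1_l.
    destruct (bounded_functional_ball X f Hf) as [C HC].
    apply (banach_limit_abs_le X u Hu L HL); auto. intros n.
    apply (sup_ball_ge X (fun x => Rabs (f x)) (ex_intro _ C HC)); auto.
  - exists x0. split.
    + destruct (norming_functional X x0) as [l [la [ls [lb lz]]]].
      assert (Hl : is_bounded_functional l).
      { repeat split; auto. exists 1. intros; rewrite Rmult_1_l; auto. }
      rewrite <- lz, <- Hx0 by auto. eapply Rle_trans; [apply RRle_abs|].
      apply (banach_limit_abs_le X u Hu L HL); auto.
      intros n. eapply Rle_trans; [apply lb|apply Hu].
    + destruct (norming_functional Y y) as [g [ga [gs [gb gz]]]].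
      assert (Hf : is_bounded_functional (fun x => g (S x))).
      { split; [intros; rewrite (proj1 S_linear); auto|].
        split; [intros; rewrite (proj2 S_linear); auto|].
        exists (opnorm S). intros x. eapply Rle_trans; [apply gb|apply opnorm_homo]. }
      assert (Lf : L (fun x => g (S x)) = g y).
      { apply (banach_limit_converges X u Hu L HL); auto.
        intros e He. destruct (Hc e ltac:(lra)) as [N HN]. exists N. intros n Hn.
        rewrite <- (vadd_subK Y y (S (u n))) at 1. rewrite ga.
        replace (g y + g (vsub (S (u n)) y) - g y) with (g (vsub (S (u n)) y)) by ring.
        eapply Rle_trans; [apply gb|]. specialize (HN n Hn). lra. }
      rewrite Hx0 in Lf by auto. rewrite <- gz, <- Lf.
      eapply Rle_trans; [apply RRle_abs|apply gb].
Qed.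

Lemma opnorm_attained : (exists e : X, vnorm e = 1) ->
  exists x, vnorm x = 1 /\ vnorm (S x) = opnorm S.
Proof.
  intros [e He]. assert (H0 := opnorm_ge0).
  destruct (Rle_lt_or_eq_dec 0 (opnorm S) H0) as [Hpos|Hz].
  - destruct maximising_sequence as [u [y [Hu [Hc Hy]]]].
    destruct (reflexive_cluster_point u y Hu Hc) as [x0 [Hx0 HSx0]].
    assert (E := opnorm_homo x0). exists x0. split; nra.
  - exists e. split; auto. assert (E := opnorm_homo e).
    assert (0 <= vnorm (S e)) by apply vnorm_ge0. rewrite <- Hz in E |- *. nra.
Qed.
End CompactOperator.

Lemma is_compact_op_add_scal {X Y : NormedSpace} (T A : X -> Y) l :
  is_compact_op T -> is_compact_op A -> is_compact_op (op_add_scal T A l).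
Proof.
  intros [[Ta Ts] Tc] [[Aa As] Ac]. unfold op_add_scal. split; [split|].
  - intros x y. rewrite Ta, Aa, vscal_addv. apply vaddACA.
  - intros a x. rewrite Ts, As, vscal_addv, !vscal_assoc, Rmult_comm. reflexivity.
  - intros u Hu.
    destruct (Tc u Hu) as [p1 [l1 [Hp1 Hc1]]].
    destruct (Ac (fun n => u (p1 n)) (fun n => Hu _)) as [p2 [l2 [Hp2 Hc2]]].
    assert (Hmono : forall a b, (a < b)%nat -> (p1 a < p1 b)%nat).
    { intros a b Hab. induction Hab; [apply Hp1|]. specialize (Hp1 m). lia. }
    exists (fun n => p1 (p2 n)), (vadd l1 (vscal l l2)). split; [intros n; apply Hmono, Hp2|].
    intros e He. set (k := 1 + Rabs l).
    assert (Hk : 0 < k) by (unfold k; assert (0 <= Rabs l) by apply Rabs_pos; lra).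
    destruct (Hc1 (e / 2) ltac:(lra)) as [N1 H1].
    destruct (Hc2 (e / (2 * k)) ltac:(apply Rdiv_lt_0_compat; lra)) as [N2 H2].
    exists (max N1 N2). intros n Hn.
    rewrite vsub_add, vsub_scal. eapply Rle_lt_trans; [apply vnorm_triangle|].
    rewrite vnorm_scal.
    assert (G := strict_mono_ge p2 Hp2 n).
    specialize (H1 (p2 n) ltac:(lia)). specialize (H2 n ltac:(lia)).
    assert (E : Rabs l * vnorm (vsub (A (u (p1 (p2 n)))) l2) <= k * (e / (2 * k))).
    { assert (0 <= Rabs l) by apply Rabs_pos.
      assert (0 <= vnorm (vsub (A (u (p1 (p2 n)))) l2)) by apply vnorm_ge0.
      set (e' := e / (2 * k)) in *. unfold k. nra. }
    replace (k * (e / (2 * k))) with (e / 2) in E by (field; lra). lra.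
Qed.

Lemma nonzero_op_unit_vector {X Y : NormedSpace} (A : X -> Y) : is_linear A ->
  A <> (fun _ => vzero) -> exists e, vnorm e = 1 /\ A e <> vzero.
Proof.
  intros [_ As] HA0.
  assert (Hx : exists x, A x <> vzero).
  { apply NNPP. intros Hn. apply HA0, functional_extensionality. intros x.
    apply NNPP. intros Hx. apply Hn. eauto. }
  destruct Hx as [x Hx].
  assert (Hn : 0 < vnorm x).
  { destruct (Rle_lt_or_eq_dec _ _ (vnorm_ge0 X x)) as [G|G]; auto.
    symmetry in G. apply vnorm_eq0 in G. subst x.
    rewrite <- (vscal0 X vzero), As, vscal0 in Hx. easy. }
  exists (vscal (/ vnorm x) x). split.
  - rewrite vnorm_scal, Rabs_right; [field; lra|]. apply Rle_ge, Rlt_le, Rinv_0_lt_compat; auto.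
  - rewrite As. intros H. apply (f_equal vnorm) in H.
    rewrite vnorm_scal, vnorm0 in H. apply Hx, vnorm_eq0.
    assert (0 < Rabs (/ vnorm x)) by (apply Rabs_pos_lt, Rinv_neq_0_compat; lra). nra.
Qed.

Lemma opnorm_pos_of_nonzero {X Y : NormedSpace} (A : X -> Y) : is_compact_op A ->
  A <> (fun _ => vzero) -> 0 < opnorm A.
Proof.
  intros HA HA0. destruct (nonzero_op_unit_vector A (proj1 HA) HA0) as [e [He HAe]].
  assert (0 < vnorm (A e)).
  { destruct (Rle_lt_or_eq_dec _ _ (vnorm_ge0 Y (A e))) as [G|G]; auto.
    symmetry in G. apply vnorm_eq0 in G. easy. }
  assert (E := opnorm_ge X Y A HA e ltac:(lra)). lra.
Qed.

Lemma sqrt_1_minus_sqr_bounds eps : 0 <= sqrt (1 - eps ^ 2) <= 1.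
Proof.
  split; [apply sqrt_pos|]. rewrite <- sqrt_1 at 2. apply sqrt_le_1_alt.
  assert (0 <= eps ^ 2) by apply pow2_ge_0. lra.
Qed.

(* With [N = ||T + lam A||], the two triangle inequalities settle every
   negative [lam] outside the critical interval. *)
Lemma approx_orth_bound_plus t a N lam s : 0 < a -> 0 <= t -> 0 <= s <= 1 ->
  t <= N + Rabs lam * a -> Rabs lam * a <= N + t ->
  (0 <= lam -> t <= N) ->
  ((-1 - s) * (t / a) < lam -> lam < (-1 + s) * (t / a) -> s * t <= N) ->
  s * t <= N.
Proof.
  intros Ha Ht Hs H1 H2 Hpos Hint.
  set (c := t / a) in *. assert (Hc : c * a = t) by (unfold c; field; lra).
  destruct (Rle_or_lt 0 lam) as [Hl|Hl]; [specialize (Hpos Hl); nra|].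
  rewrite Rabs_left in H1, H2 by lra.
  destruct (Rle_or_lt lam ((-1 - s) * c)) as [K1|K1].
  - assert (lam * a <= (-1 - s) * c * a) by (apply Rmult_le_compat_r; lra). nra.
  - destruct (Rle_or_lt ((-1 + s) * c) lam) as [K2|K2].
    + assert ((-1 + s) * c * a <= lam * a) by (apply Rmult_le_compat_r; lra). nra.
    + apply Hint; auto.
Qed.

Lemma approx_orth_bound_minus t a N lam s : 0 < a -> 0 <= t -> 0 <= s <= 1 ->
  t <= N + Rabs lam * a -> Rabs lam * a <= N + t ->
  (lam <= 0 -> t <= N) ->
  ((1 - s) * (t / a) < lam -> lam < (1 + s) * (t / a) -> s * t <= N) ->
  s * t <= N.
Proof.
  intros Ha Ht Hs H1 H2 Hneg Hint. apply (approx_orth_bound_plus t a N (- lam) s);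
    rewrite ?Rabs_Ropp; auto.
  - intros; apply Hneg; lra.
  - intros K1 K2. apply Hint; lra.
Qed.

Section ApproxOrthogonality.
Variables X Y : NormedSpace.
Variables T A : X -> Y.
Hypothesis T_compact : is_compact_op T.
Hypothesis A_compact : is_compact_op A.
Variable eps : R.

Lemma opnorm_add_scal_ge l x : vnorm x <= 1 ->
  vnorm (vadd (T x) (vscal l (A x))) <= opnorm (op_add_scal T A l).
Proof. apply (opnorm_ge X Y _ (is_compact_op_add_scal T A l T_compact A_compact)). Qed.

Lemma opnorm_le_add_scal l : opnorm T <= opnorm (op_add_scal T A l) + Rabs l * opnorm A.
Proof.
  apply opnorm_le; auto. intros x Hx.
  rewrite <- (vadd_scalK Y (T x) (A x) l) at 1.
  eapply Rle_trans; [apply vnorm_triangle|]. rewrite vnorm_scal, Rabs_Ropp.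
  apply Rplus_le_compat; [apply opnorm_add_scal_ge; auto|].
  apply Rmult_le_compat_l; [apply Rabs_pos|]. apply opnorm_ge; auto.
Qed.

Lemma opnorm_scal_le_add_scal l : Rabs l * opnorm A <= opnorm (op_add_scal T A l) + opnorm T.
Proof.
  apply opnorm_scal_le; auto; [apply Rabs_pos|]. intros x Hx.
  rewrite <- vnorm_scal, <- (vadd_scal_oppK Y (T x) (vscal l (A x))).
  eapply Rle_trans; [apply vnorm_triangle|]. rewrite vnorm_scal_opp.
  apply Rplus_le_compat; [apply opnorm_add_scal_ge; auto|apply opnorm_ge; auto].
Qed.

Hypothesis A_pos : 0 < opnorm A.

Lemma BJ_eps_orth_of_in_plus :
  (exists x, M_set T x /\ in_plus (T x) (A x)) ->
  (forall lam,
     (-1 - sqrt (1 - eps ^ 2)) * (opnorm T / opnorm A) < lam ->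
     lam < (-1 + sqrt (1 - eps ^ 2)) * (opnorm T / opnorm A) ->
     exists xl, unit_sphere xl /\
       vnorm (vadd (T xl) (vscal lam (A xl))) >= sqrt (1 - eps ^ 2) * opnorm T) ->
  BJ_eps_orth eps T A.
Proof.
  intros [x [[Hx HTx] HAx]] Hint lam. apply Rle_ge.
  apply (approx_orth_bound_plus _ (opnorm A) _ lam); auto.
  - apply opnorm_ge0; auto.
  - apply sqrt_1_minus_sqr_bounds.
  - apply opnorm_le_add_scal.
  - apply opnorm_scal_le_add_scal.
  - intros Hl. rewrite <- HTx. eapply Rle_trans; [apply Rge_le, (HAx lam); lra|].
    apply opnorm_add_scal_ge. unfold unit_sphere in Hx; lra.
  - intros K1 K2. destruct (Hint lam K1 K2) as [xl [Hxl Hv]].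
    eapply Rle_trans; [apply Rge_le, Hv|]. apply opnorm_add_scal_ge.
    unfold unit_sphere in Hxl; lra.
Qed.

Lemma BJ_eps_orth_of_in_minus :
  (exists y, M_set T y /\ in_minus (T y) (A y)) ->
  (forall lam,
     (1 - sqrt (1 - eps ^ 2)) * (opnorm T / opnorm A) < lam ->
     lam < (1 + sqrt (1 - eps ^ 2)) * (opnorm T / opnorm A) ->
     exists yl, unit_sphere yl /\
       vnorm (vadd (T yl) (vscal lam (A yl))) >= sqrt (1 - eps ^ 2) * opnorm T) ->
  BJ_eps_orth eps T A.
Proof.
  intros [y [[Hy HTy] HAy]] Hint lam. apply Rle_ge.
  apply (approx_orth_bound_minus _ (opnorm A) _ lam); auto.
  - apply opnorm_ge0; auto.
  - apply sqrt_1_minus_sqr_bounds.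
  - apply opnorm_le_add_scal.
  - apply opnorm_scal_le_add_scal.
  - intros Hl. rewrite <- HTy. eapply Rle_trans; [apply Rge_le, (HAy lam); lra|].
    apply opnorm_add_scal_ge. unfold unit_sphere in Hy; lra.
  - intros K1 K2. destruct (Hint lam K1 K2) as [yl [Hyl Hv]].
    eapply Rle_trans; [apply Rge_le, Hv|]. apply opnorm_add_scal_ge.
    unfold unit_sphere in Hyl; lra.
Qed.

Hypothesis X_reflexive : is_reflexive X.
Hypothesis X_unit : exists e : X, vnorm e = 1.

Lemma BJ_eps_orth_attained : BJ_eps_orth eps T A -> forall lam,
  exists xl, unit_sphere xl /\
    vnorm (vadd (T xl) (vscal lam (A xl))) >= sqrt (1 - eps ^ 2) * opnorm T.
Proof.
  intros BJ lam.
  destruct (opnorm_attained X Y _ (is_compact_op_add_scal T A lam T_compact A_compact)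
              X_reflexive X_unit) as [x [Hx HTx]].
  exists x. split; auto. unfold op_add_scal in HTx. rewrite HTx. apply BJ.
Qed.
End ApproxOrthogonality.

Theorem mainTheorem1 (X Y : NormedSpace) (HXB : is_Banach X) (HXR : is_reflexive X)
  (T A : X -> Y) (HT : is_compact_op T) (HA : is_compact_op A)
  (HA0 : A <> (fun _ => vzero)) (eps : R) (He0 : 0 <= eps) (He1 : eps < 1) :
  BJ_eps_orth eps T A <->
  ((exists x, M_set T x /\ in_plus (T x) (A x)) /\
   (forall lam,
      (-1 - sqrt (1 - eps ^ 2)) * (opnorm T / opnorm A) < lam ->
      lam < (-1 + sqrt (1 - eps ^ 2)) * (opnorm T / opnorm A) ->
      exists xl, unit_sphere xl /\
        vnorm (vadd (T xl) (vscal lam (A xl))) >= sqrt (1 - eps ^ 2) * opnorm T))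
  \/
  ((exists y, M_set T y /\ in_minus (T y) (A y)) /\
   (forall lam,
      (1 - sqrt (1 - eps ^ 2)) * (opnorm T / opnorm A) < lam ->
      lam < (1 + sqrt (1 - eps ^ 2)) * (opnorm T / opnorm A) ->
      exists yl, unit_sphere yl /\
        vnorm (vadd (T yl) (vscal lam (A yl))) >= sqrt (1 - eps ^ 2) * opnorm T)).
Proof.
  destruct (nonzero_op_unit_vector A (proj1 HA) HA0) as [e [He _]].
  assert (HApos := opnorm_pos_of_nonzero A HA HA0).
  split.
  - intros BJ.
    destruct (opnorm_attained X Y T HT HXR (ex_intro _ e He)) as [x [Hx HTx]].
    assert (Hsec := BJ_eps_orth_attained X Y T A HT HA eps HXR (ex_intro _ e He) BJ).
    destruct (in_plus_or_in_minus Y (T x) (A x)) as [Hp|Hm]; [left|right];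
      split; eauto; exists x; repeat split; auto.
  - intros [[HM Hint]|[HM Hint]].
    + apply BJ_eps_orth_of_in_plus; auto.
    + apply BJ_eps_orth_of_in_minus; auto.
Qed.
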